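(* Let $k$ be a field, $\Gamma=(V,E)$ a finite connected quiver, and $I\subseteq R^2$ a two-sided ideal of $k\Gamma$ such that $k\Gamma/I$ is finite dimensional. With $\mathscr{Q}$, $\mathscr{Q}_C$ and $\mathfrak{B}_2$ as in the context, $$\dim_k H^1(k\Gamma,k\Gamma/I)=|\mathfrak{B}_2|+\dim_k Z(k\Gamma/I)-|\mathscr{Q}_C|.$$
   Context: For a path $p$, $t(p),h(p)$ are its start and end vertex; paths multiply by left-to-right concatenation (product $0$ if they do not concatenate). $R$ is the ideal generated by $E$, $\overline{x}=x+I$. A differential operator from $k\Gamma$ to $k\Gamma/I$ is a $k$-linear map with $D(xy)=D(x)\overline{y}+\overline{x}D(y)$; inner ones are those of the form $x\mapsto m\overline{x}-\overline{x}m$, $m\in k\Gamma/I$; $H^1(k\Gamma,k\Gamma/I)$ is the quotient of the space of differential operators by the inner ones. $Z(k\Gamma/I)$ is the center of $k\Gamma/I$. $\mathscr{Q}$ is a fixed $k$-basis of $k\Gamma/I$ consisting of residue classes of paths and containing the classes of all vertices and arrows; for $\overline{s}\in\mathscr{Q}$, $t(\overline{s}),h(\overline{s})$ are the start/end vertex of any representing path (well defined). $\mathscr{Q}_C=\{\overline{q}\in\mathscr{Q}\mid t(\overline{q})=h(\overline{q})\}$. $\mathfrak{B}_2=\{D_{r,\overline{s}}\mid r\in E,\ \overline{s}\in\mathscr{Q},\ t(r)=t(\overline{s}),\ h(r)=h(\overline{s})\}$, where $D_{r,\overline{s}}$ is the unique differential operator $k\Gamma\to k\Gamma/I$ with $D_{r,\overline{s}}(r)=\overline{s}$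 and vanishing on all other arrows and all vertices. *)

From HB Require Import structures.
From mathcomp Require Import all_boot all_order all_algebra all_field.
From mathcomp Require Import monalg.

Set Implicit Arguments.
Unset Strict Implicit.
Unset Printing Implicit Defensive.

Import GRing.Theory.
Local Open Scope ring_scope.

Section Quiver.

Variables (V E : finType) (t h : E -> V).

Definition quiver_adj : rel V :=
  fun x y => [exists a : E, ((t a == x) && (h a == y)) || ((t a == y) && (h a == x))].

Definition connected_quiver : Prop := forall u v : V, connect quiver_adj u v.

(* (v, s) is a path starting at v with arrow sequence s (left-to-right). *)
Definition is_qpath (x : V * seq E) : bool :=
  if x.2 is a :: s then (t a == x.1) && path (fun a b => h a == t b) a s
  else true.

Definition qpath := {x : V * seq E | is_qpath x}.

Definition qstart (p : qpath) : V := (val p).1.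
Definition qend (p : qpath) : V :=
  if (val p).2 is a :: s then h (last a s) else (val p).1.
Definition qlen (p : qpath) : nat := size (val p).2.

Definition vpath (v : V) : qpath := exist _ (v, [::]) isT.
Lemma arrow_is_qpath (a : E) : is_qpath (t a, [:: a]).
Proof. by rewrite /is_qpath /= eqxx. Qed.
Definition apath (a : E) : qpath := exist _ (t a, [:: a]) (arrow_is_qpath a).

(* concatenation of paths; None stands for the product 0 *)
Definition qconcat (p q : qpath) : option qpath :=
  if qend p == qstart q then insub ((val p).1, (val p).2 ++ (val q).2)
  else None.

Variable k : fieldType.

Definition pathalg := {malg k[qpath]}.

Definition pathel (p : qpath) : pathalg := << p >>.

Definition pmul (x y : pathalg) : pathalg :=
  \sum_(p <- finmap.enum_fset (msupp x)) \sum_(q <- finmap.enum_fset (msupp y))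
     (x@_p * y@_q) *: (if qconcat p q is Some r then pathel r else 0).

Definition pone : pathalg := \sum_(v : V) pathel (vpath v).

Definition is_ideal (I : pathalg -> Prop) : Prop :=
  [/\ I 0,
      (forall x y, I x -> I y -> I (x + y)),
      (forall (a : k) x, I x -> I (a *: x)),
      (forall x y, I y -> I (pmul x y)) &
      (forall x y, I x -> I (pmul x y))].

(* R^2 (R = ideal generated by the arrows) is the span of the paths of
   length >= 2: membership means all coefficients on paths of length < 2
   vanish. *)
Definition inR2 (x : pathalg) : Prop := forall p, (qlen p < 2)%N -> x@_p = 0.

(* pi : k Gamma -> A exhibits A as the quotient algebra k Gamma / I. *)
Definition is_quotient_map (I : pathalg -> Prop) (A : falgType k)
    (pi : pathalg -> A) : Prop :=
  [/\ (forall (a : k) x y, pi (a *: x + y) = a *: pi x + pi y),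
      (forall x y, pi (pmul x y) = pi x * pi y),
      pi pone = 1,
      (forall z : A, exists x, pi x = z) &
      (forall x, pi x = 0 <-> I x)].

Section Derivations.
Variables (A : falgType k) (pi : pathalg -> A).

Definition is_diffop (D : pathalg -> A) : Prop :=
  (forall (a : k) x y, D (a *: x + y) = a *: D x + D y) /\
  (forall x y, D (pmul x y) = D x * pi y + pi x * D y).

Definition is_inner (D : pathalg -> A) : Prop :=
  exists m : A, forall x, D x = m * pi x - pi x * m.

(* dim_k H^1(k Gamma, k Gamma / I) = n : there are n differential operators
   whose classes form a basis of (differential operators) / (inner ones). *)
Definition H1_dim (n : nat) : Prop :=
  exists Ds : 'I_n -> pathalg -> A,
    [/\ (forall i, is_diffop (Ds i)),
        (forall c : 'I_n -> k,
           is_inner (fun x => \sum_i c i *: Ds i x) -> forall i, c i = 0) &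
        (forall D, is_diffop D ->
           exists c : 'I_n -> k,
             is_inner (fun x => D x - \sum_i c i *: Ds i x))].

(* Q given by representing paths; its classes form a basis of A. *)
Definition path_basis (Q : seq qpath) : Prop :=
  [/\ basis_of fullv [seq pi (pathel q) | q <- Q],
      (forall v, exists2 q, q \in Q & pi (pathel q) = pi (pathel (vpath v))) &
      (forall a, exists2 q, q \in Q & pi (pathel q) = pi (pathel (apath a)))].

Definition card_QC (Q : seq qpath) : nat := count (fun q => qstart q == qend q) Q.

(* |B_2| = number of pairs (r, s) with r an arrow, s in Q, t r = t s, h r = h s
   (the operators D_{r,s} are pairwise distinct). *)
Definition card_B2 (Q : seq qpath) : nat :=
  \sum_(r : E) count (fun q => (qstart q == t r) && (qend q == h r)) Q.

End Derivations.

End Quiver.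

From HB Require Import structures.
From mathcomp Require Import all_boot all_order all_algebra all_field.
From mathcomp Require Import monalg finmap.

Set Implicit Arguments.
Unset Strict Implicit.
Unset Printing Implicit Defensive.
Import GRing.Theory.
Local Open Scope ring_scope.

(* A differential operator D : kΓ -> A = kΓ/I is determined by its values on
   the vertex idempotents e_v and on the arrows.  Subtracting a suitable inner
   operator makes D vanish on every e_v; such operators correspond exactly to
   families (D(a))_a with D(a) in the corner e_(t a) A e_(h a).  As the classes
   of the paths of Q from v to w form a basis of e_v A e_w, these families form
   a space of dimension |B_2|.  The inner operator of m vanishes on vertices iff
   m commutes with all e_v, i.e. iff m lies in the span of Q_C, and on that
   span m |-> (m a - a m)_a has kernel Z(A).  Hence dim H^1 =
   |B_2| - (|Q_C| - dim Z(A)). *)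

Section LinearFun.
Variables (R : pzRingType) (U W : lmodType R) (f : U -> W).
Hypothesis f_lin : linear f.

Let F : {linear U -> W} := HB.pack f (GRing.isLinear.Build _ _ _ _ f f_lin).

Lemma linear_fun0 : f 0 = 0. Proof. exact: (linear0 F). Qed.
Lemma linear_funZ a x : f (a *: x) = a *: f x. Proof. exact: (linearZZ F a x). Qed.
Lemma linear_fun_sum (I : Type) (r : seq I) (G : I -> U) :
  f (\sum_(i <- r) G i) = \sum_(i <- r) f (G i).
Proof. exact: (linear_sum F r predT G). Qed.

End LinearFun.

Lemma linfun_linearE (K : fieldType) (U W : vectType K) (f : U -> W) :
  linear f -> forall x, linfun f x = f x.
Proof.
move=> f_lin x.
exact: (lfunE (HB.pack f (GRing.isLinear.Build _ _ _ _ f f_lin)) x).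
Qed.

Section Paths.
Variables (V E : finType) (t h : E -> V).
Local Notation path := (qpath t h).

Lemma qcat_is_qpath (p q : path) : qend p == qstart q ->
  is_qpath t h ((val p).1, (val p).2 ++ (val q).2).
Proof.
case: p => [[v s] /= p_path]; case: q => [[w s'] /= q_path].
rewrite /qend /qstart /=.
case: s p_path => [|a s] /= p_path; first by move/eqP=> ->.
move=> /eqP pq; case/andP: p_path => /= ta s_path.
rewrite /is_qpath /= ta /= cat_path s_path /=.
by case: s' q_path => [|b s'] //= /andP[tb ->]; rewrite andbT pq eq_sym.
Qed.

Definition qcat p q (pq : qend p == qstart q) : path :=
  exist (is_qpath t h) _ (qcat_is_qpath pq).

Lemma qconcatE p q (pq : qend p == qstart q) : qconcat p q = Some (qcat pq).
Proof. by rewrite /qconcat pq (insubT _ (qcat_is_qpath pq)). Qed.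

Lemma vpath_nil (p : path) : (val p).2 = [::] -> p = vpath t h (val p).1.
Proof. by case: p => [[v s] p_path] /= s0; apply/val_inj => /=; rewrite s0. Qed.

Lemma qcat_vpathl v p (vp : qend (vpath t h v) == qstart p) : qcat vp = p.
Proof.
apply/val_inj; have /eqP := vp; rewrite /qend /qstart /= => ->.
by case: p {vp} => [[]].
Qed.

Lemma qcat_vpathr v p (pv : qend p == qstart (vpath t h v)) : qcat pv = p.
Proof. by apply/val_inj; rewrite /= cats0; case: p {pv} => [[]]. Qed.

Section Behead.
Variables (p : path) (a : E) (s : seq E).
Hypothesis ps : (val p).2 = a :: s.

Lemma qstart_cons : qstart p = t a.
Proof.
case: p ps => [[v s0] p_path] /= s0E; move: p_path.
by rewrite /qstart /is_qpath /= s0E => /andP[/eqP ->].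
Qed.

Lemma qbehead_is_qpath : is_qpath t h (h a, s).
Proof.
case: p ps => [[v s0] /= p_path] s0E; move: p_path; rewrite s0E /= => /andP[_].
by case: s {s0E} => [|b s'] //= /andP[ab s_path]; rewrite /is_qpath /= eq_sym ab s_path.
Qed.

Definition qbehead : path := exist (is_qpath t h) _ qbehead_is_qpath.

Lemma qend_behead : qend qbehead = qend p.
Proof. by rewrite /qend /= ps; case: s ps. Qed.

Lemma qcat_apath_behead (pq : qend (apath t h a) == qstart qbehead) : qcat pq = p.
Proof.
by apply/val_inj; rewrite /= -qstart_cons /qstart -ps -surjective_pairing.
Qed.

End Behead.
End Paths.

Fact pbasis_key : unit. Proof. by []. Qed.

Section PathAlgebra.
Variables (k : fieldType) (V E : finType) (t h : E -> V).
Local Notation path := (qpath t h).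
Local Notation P := (pathalg t h k).

(* Locked: letting unification unfold [pathel] inside the monoid algebra diverges. *)
Definition pbasis : path -> P := locked_with pbasis_key (@pathel V E t h k).

Lemma pbasisE p : pbasis p = pathel k p. Proof. by rewrite /pbasis unlock. Qed.

Lemma mcoeff_pbasis p q : (pbasis p)@_q = (p == q)%:R.
Proof. by rewrite pbasisE; apply: mcoeffU. Qed.

Lemma msupp_pbasis p : msupp (pbasis p) = [fset p]%fset.
Proof. by rewrite pbasisE /pathel msuppU oner_eq0. Qed.

Lemma pathalg_expand (x : P) : x = \sum_(p <- msupp x) x@_p *: pbasis p.
Proof.
rewrite {1}[x]monalgE; apply: eq_bigr => p _; apply/malgP => q.
rewrite [RHS]mcoeffZ mcoeff_pbasis mcoeffU.
by case: eqP; rewrite ?mulr1 ?mulr0.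
Qed.

Lemma pmul_pbasis p q :
  pmul (pbasis p) (pbasis q) = if qconcat p q is Some r then pathel k r else 0.
Proof. by rewrite /pmul !msupp_pbasis !big_seq_fset1 !mcoeff_pbasis !eqxx mulr1 scale1r. Qed.

Lemma pmul_expand (x y : P) : pmul x y =
  \sum_(p <- msupp x) \sum_(q <- msupp y) (x@_p * y@_q) *: pmul (pbasis p) (pbasis q).
Proof.
by rewrite {1}/pmul; apply: eq_bigr => p _; apply: eq_bigr => q _; rewrite pmul_pbasis.
Qed.

Lemma pmul_qcat p q (pq : qend p == qstart q) :
  pmul (pbasis p) (pbasis q) = pbasis (qcat pq).
Proof. by rewrite pmul_pbasis qconcatE pbasisE. Qed.

Lemma pmul_ncat p q : qend p != qstart q -> pmul (pbasis p) (pbasis q) = 0.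
Proof. by rewrite pmul_pbasis /qconcat => /negPf ->. Qed.

Lemma pmul_vpathl v p :
  pmul (pbasis (vpath t h v)) (pbasis p) = if v == qstart p then pbasis p else 0.
Proof.
case: ifP => [vp|/negbT vp]; last exact: pmul_ncat.
by rewrite (pmul_qcat (vp : qend (vpath t h v) == qstart p)) qcat_vpathl.
Qed.

Lemma pmul_vpathr v p :
  pmul (pbasis p) (pbasis (vpath t h v)) = if qend p == v then pbasis p else 0.
Proof.
case: ifP => [pv|/negbT pv]; last exact: pmul_ncat.
by rewrite (pmul_qcat (pv : qend p == qstart (vpath t h v))) qcat_vpathr.
Qed.

Lemma pmul_apath_behead p a s (ps : (val p).2 = a :: s) :
  pmul (pbasis (apath t h a)) (pbasis (qbehead ps)) = pbasis p.
Proof.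
have pq : qend (apath t h a) == qstart (qbehead ps) by [].
by rewrite (pmul_qcat pq) qcat_apath_behead.
Qed.

Lemma pbasis_expand_linear (W : lmodType k) (L : P -> W) :
  linear L -> forall x, L x = \sum_(p <- msupp x) x@_p *: L (pbasis p).
Proof.
move=> L_lin x; rewrite {1}(pathalg_expand x) linear_fun_sum //.
by apply: eq_bigr => p _; rewrite linear_funZ.
Qed.

Section Derivations.
Variables (A : falgType k) (pi : P -> A).
Hypothesis pi_lin : linear pi.
Hypothesis pi_mul : forall x y, pi (pmul x y) = pi x * pi y.
Hypothesis pi_one : pi (pone t h k) = 1.

Lemma leibniz_from_pbasis (D : P -> A) : linear D ->
  (forall p q, D (pmul (pbasis p) (pbasis q)) =
     D (pbasis p) * pi (pbasis q) + pi (pbasis p) * D (pbasis q)) ->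
  forall x y, D (pmul x y) = D x * pi y + pi x * D y.
Proof.
move=> D_lin Dpq x y.
rewrite pmul_expand linear_fun_sum //.
under eq_bigr do rewrite linear_fun_sum //.
under eq_bigr do under eq_bigr do rewrite linear_funZ // Dpq.
rewrite !(pbasis_expand_linear D_lin) !(pbasis_expand_linear pi_lin).
rewrite !mulr_suml -big_split /=; apply: eq_bigr => p _.
rewrite !mulr_sumr -big_split /=; apply: eq_bigr => q _.
by rewrite scalerDr -!scalerAl -!scalerAr !scalerA.
Qed.

Lemma diffop_eq0 D : is_diffop pi D ->
  (forall v, D (pbasis (vpath t h v)) = 0) ->
  (forall a, D (pbasis (apath t h a)) = 0) -> forall x, D x = 0.
Proof.
case=> D_lin D_mul Dv Da.
have Dp p : D (pbasis p) = 0.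
  move ps: (val p).2 => s; elim: s p ps => [|a s IH] p ps.
    by rewrite (vpath_nil ps) Dv.
  by rewrite -(pmul_apath_behead ps) D_mul Da IH // mul0r mulr0 addr0.
by move=> x; rewrite (pbasis_expand_linear D_lin) big1 // => p _; rewrite Dp scaler0.
Qed.

Lemma diffopB D1 D2 : is_diffop pi D1 -> is_diffop pi D2 ->
  is_diffop pi (fun x => D1 x - D2 x).
Proof.
case=> L1 M1 [L2 M2]; split.
  by move=> a x y; rewrite L1 L2 scalerBr opprD addrACA.
by move=> x y; rewrite M1 M2 mulrBl mulrBr opprD addrACA.
Qed.

Lemma diffop_lincomb n (Ds : 'I_n -> P -> A) (c : 'I_n -> k) :
  (forall i, is_diffop pi (Ds i)) -> is_diffop pi (fun x => \sum_i c i *: Ds i x).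
Proof.
move=> Ds_diff; split.
  move=> a x y; rewrite scaler_sumr -big_split /=; apply: eq_bigr => i _.
  by case: (Ds_diff i) => L _; rewrite L scalerDr !scalerA mulrC.
move=> x y; rewrite mulr_suml mulr_sumr -big_split /=; apply: eq_bigr => i _.
by case: (Ds_diff i) => _ M; rewrite M scalerDr scalerAl scalerAr.
Qed.

Lemma commr_subD (m m' a : A) :
  (m + m') * a - a * (m + m') = (m * a - a * m) + (m' * a - a * m').
Proof. by rewrite mulrDl mulrDr opprD addrACA. Qed.

Lemma diffop_inner m : is_diffop pi (fun x => m * pi x - pi x * m).
Proof.
split.
  move=> a x y; rewrite pi_lin mulrDr mulrDl -scalerAl -scalerAr.
  by rewrite scalerBr opprD addrACA.
by move=> x y; rewrite pi_mul !mulrBl !mulrBr !mulrA addrA subrK.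
Qed.

Definition pcls p := pi (pbasis p).
Definition vcls v := pcls (vpath t h v).
Definition acls a := pcls (apath t h a).

Lemma vclsMl v p : vcls v * pcls p = if v == qstart p then pcls p else 0.
Proof.
by rewrite -pi_mul pmul_vpathl; case: ifP => // _; rewrite (linear_fun0 pi_lin).
Qed.

Lemma vclsMr v p : pcls p * vcls v = if qend p == v then pcls p else 0.
Proof.
by rewrite -pi_mul pmul_vpathr; case: ifP => // _; rewrite (linear_fun0 pi_lin).
Qed.

Lemma vclsM v w : vcls v * vcls w = if v == w then vcls v else 0.
Proof. exact: vclsMr. Qed.

Lemma vcls_idem v : vcls v * vcls v = vcls v.
Proof. by rewrite vclsM eqxx. Qed.

Lemma vclsMacls a : vcls (t a) * acls a = acls a.
Proof. by rewrite vclsMl eqxx. Qed.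

Lemma aclsMvcls a : acls a * vcls (h a) = acls a.
Proof. by rewrite vclsMr eqxx. Qed.

Lemma sum_vcls : \sum_v vcls v = 1.
Proof.
rewrite -pi_one /pone (linear_fun_sum pi_lin).
by apply: eq_bigr => v _; rewrite /vcls /pcls pbasisE.
Qed.

Definition word_cls (s : seq E) := \prod_(a <- s) acls a.

Lemma pcls_word p : pcls p = vcls (qstart p) * word_cls (val p).2.
Proof.
move ps: (val p).2 => s; elim: s p ps => [|a s IH] p ps.
  by rewrite (vpath_nil ps) /word_cls big_nil mulr1.
rewrite {1}/pcls -(pmul_apath_behead ps) pi_mul -/(pcls (qbehead ps)) IH //.
rewrite -/(pcls (apath t h a)) -/(acls a) mulrA aclsMvcls.
by rewrite (qstart_cons ps) /word_cls big_cons mulrA vclsMacls.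
Qed.

Lemma word_cls_cat s s' : word_cls (s ++ s') = word_cls s * word_cls s'.
Proof. by rewrite /word_cls big_cat. Qed.

Fixpoint word_diff (g : E -> A) (s : seq E) : A :=
  if s is a :: s' then g a * word_cls s' + acls a * word_diff g s' else 0.

Lemma word_diff_cat g s s' :
  word_diff g (s ++ s') = word_diff g s * word_cls s' + word_cls s * word_diff g s'.
Proof.
elim: s => [|a s IH] /=; first by rewrite /word_cls big_nil mul0r add0r mul1r.
by rewrite IH word_cls_cat /word_cls big_cons mulrDr mulrDl !mulrA addrA.
Qed.

Definition corner (g : E -> A) a := vcls (t a) * g a * vcls (h a).

Definition path_diff g (p : path) := vcls (qstart p) * word_diff (corner g) (val p).2.

Lemma path_diffMvcls g p : path_diff g p * vcls (qend p) = path_diff g p.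
Proof.
rewrite /path_diff; move ps: (val p).2 => s.
elim: s p ps => [|a s IH] p ps /=; first by rewrite mulr0 mul0r.
have := IH _ (erefl : (val (qbehead ps)).2 = s); rewrite qend_behead => IHr.
rewrite -!mulrA; congr (_ * _); rewrite mulrDl; congr (_ + _).
  have := vclsMr (qend p) (qbehead ps); rewrite qend_behead eqxx pcls_word.
  by rewrite /corner -!mulrA => ->.
by rewrite -[acls a]aclsMvcls -!mulrA [vcls (h a) * (_ * _)]mulrA IHr.
Qed.

Lemma path_diff_qcat g p q (pq : qend p == qstart q) :
  path_diff g (qcat pq) = path_diff g p * pcls q + pcls p * path_diff g q.
Proof.
have pE := vclsMr (qend p) p; rewrite eqxx pcls_word in pE.
have dE := path_diffMvcls g p; rewrite /path_diff in dE.
rewrite /path_diff /= word_diff_cat mulrDr !mulrA (pcls_word p) (pcls_word q).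
by rewrite -(eqP pq) pE mulrA dE.
Qed.

Lemma path_diff_ncat g p q : qend p != qstart q ->
  path_diff g p * pcls q + pcls p * path_diff g q = 0.
Proof.
move=> pq; have pE : pcls p * vcls (qend p) = pcls p by rewrite vclsMr eqxx.
rewrite -(path_diffMvcls g p) (pcls_word q) -pE /path_diff !mulrA.
rewrite -!(mulrA _ (vcls (qend p)) (vcls (qstart q))) vclsM (negPf pq).
by rewrite !mulr0 !mul0r addr0.
Qed.

Definition arrow_diffop g : P -> A := mmap (in_alg A) (path_diff g).

Lemma arrow_diffop_lin g : linear (arrow_diffop g).
Proof.
move=> a x y; rewrite /arrow_diffop mmapD; congr (_ + _).
rewrite (mmapEw (msuppZ_le a x)) mmapE scaler_sumr; apply: eq_bigr => p _.
by rewrite mcoeffZ /= !mulr_algl scalerA.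
Qed.

Lemma arrow_diffop_pbasis g p : arrow_diffop g (pbasis p) = path_diff g p.
Proof. by rewrite pbasisE /arrow_diffop /pathel mmapU /= mulr_algl scale1r. Qed.

Lemma arrow_diffopP g : is_diffop pi (arrow_diffop g).
Proof.
split; first exact: arrow_diffop_lin.
apply: leibniz_from_pbasis; first exact: arrow_diffop_lin.
move=> p q; rewrite !arrow_diffop_pbasis -!/(pcls _).
have [pq|npq] := boolP (qend p == qstart q).
  by rewrite (pmul_qcat pq) arrow_diffop_pbasis path_diff_qcat.
by rewrite (pmul_ncat npq) (linear_fun0 (arrow_diffop_lin g)) path_diff_ncat.
Qed.

Lemma arrow_diffop_vpath g v : arrow_diffop g (pbasis (vpath t h v)) = 0.
Proof. by rewrite arrow_diffop_pbasis /path_diff mulr0. Qed.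

Lemma arrow_diffop_apath g a : arrow_diffop g (pbasis (apath t h a)) = corner g a.
Proof.
rewrite arrow_diffop_pbasis /path_diff /= mulr0 addr0 /word_cls big_nil mulr1.
by rewrite /corner !mulrA vcls_idem.
Qed.

Lemma diffop_vertex_inner D : is_diffop pi D ->
  exists m, forall v, D (pbasis (vpath t h v)) = m * vcls v - vcls v * m.
Proof.
(* Leibniz on e_v e_w = [v == w] e_v relates the d_v; the witness is -\sum_v e_v d_v. *)
case=> D_lin D_mul; pose d v := D (pbasis (vpath t h v)).
have d_vw v w : d v * vcls w + vcls v * d w = if v == w then d v else 0.
  rewrite /d -D_mul pmul_vpathl /=.
  by case: eqP => [-> //|_]; apply: linear_fun0.
exists (- \sum_v vcls v * d v) => w.
rewrite mulNr mulrN opprK mulr_suml mulr_sumr.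
have -> : \sum_v vcls v * d v * vcls w = vcls w * d w - d w.
  transitivity (\sum_v ((if v == w then vcls v * d v else 0) - vcls v * d w)).
    apply: eq_bigr => v _; rewrite -mulrA -[d v * _](addrK (vcls v * d w)) d_vw.
    by rewrite mulrBr mulrA vcls_idem; case: eqP; rewrite ?mulr0.
  rewrite sumrB -mulr_suml sum_vcls mul1r (bigD1 w) //= eqxx big1 ?addr0 //.
  by move=> v /negPf ->.
have -> : \sum_v vcls w * (vcls v * d v) = vcls w * d w.
  rewrite (bigD1 w) //= mulrA vcls_idem big1 ?addr0 // => v vw.
  by rewrite mulrA vclsM eq_sym (negPf vw) mul0r.
by rewrite opprB subrK.
Qed.

Section Basis.
Variable Q : seq path.
Hypothesis Q_basis : basis_of fullv [seq pcls q | q <- Q].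

Lemma vcls_pcls_vcls q v w : vcls v * pcls q * vcls w =
  if (qstart q == v) && (qend q == w) then pcls q else 0.
Proof.
by rewrite vclsMl eq_sym; case: (qstart q == v); rewrite ?mul0r ?vclsMr.
Qed.

Definition corner_cls v w := [seq pcls q | q <- Q & (qstart q == v) && (qend q == w)].

Lemma sandwich_linear v w : linear (fun m : A => vcls v * m * vcls w).
Proof. by move=> a x y; rewrite mulrDr mulrDl -scalerAr -scalerAl. Qed.

Lemma mem_corner_cls m v w : vcls v * m * vcls w \in <<corner_cls v w>>%VS.
Proof.
have fE := linfun_linearE (sandwich_linear v w).
have : (fullv <= linfun (fun m : A => vcls v * m * vcls w) @^-1: <<corner_cls v w>>)%VS.
  case/andP: Q_basis => /eqP <- _; apply/span_subvP => x /mapP[q Qq ->].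
  rewrite -memv_preim fE vcls_pcls_vcls; case: ifP => qvw; last exact: mem0v.
  by apply: memv_span; apply: map_f; rewrite mem_filter qvw.
by move/subvP/(_ m (memvf m)); rewrite -memv_preim fE.
Qed.

Lemma corner_cls_fix y v w : y \in <<corner_cls v w>>%VS -> vcls v * y * vcls w = y.
Proof.
have fix_lin : linear (fun m : A => vcls v * m * vcls w - m).
  by move=> a x z; rewrite sandwich_linear scalerBr opprD addrACA.
have fE := linfun_linearE fix_lin.
have : (<<corner_cls v w>> <= lker (linfun (fun m : A => vcls v * m * vcls w - m)))%VS.
  apply/span_subvP => x /mapP[q]; rewrite mem_filter => /andP[qvw _] ->.
  by rewrite memv_ker fE vcls_pcls_vcls qvw subrr.
by move/subvP => sub /sub; rewrite memv_ker fE subr_eq0 => /eqP.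
Qed.

Lemma dim_span_filter (F : pred path) :
  \dim <<[seq pcls q | q <- Q & F q]>> = count F Q.
Proof.
have perm_Q : perm_eq [seq pcls q | q <- Q]
   ([seq pcls q | q <- Q & F q] ++ [seq pcls q | q <- Q & predC F q]).
  by rewrite -map_cat perm_map // perm_sym perm_filterC.
have := basis_free Q_basis; rewrite (perm_free perm_Q) => /catl_free.
by rewrite /free size_map size_filter => /eqP.
Qed.

Definition cycle_span := <<[seq pcls q | q <- Q & qstart q == qend q]>>%VS.

Lemma dim_cycle_span : \dim cycle_span = card_QC Q.
Proof. exact: dim_span_filter. Qed.

Lemma cycle_spanP m : reflect (forall v, m * vcls v = vcls v * m) (m \in cycle_span).
Proof.
apply: (iffP idP) => [m_cyc v | m_comm].
  apply/cent1vP; move: m m_cyc; apply/subvP/span_subvP.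
  move=> x /mapP[q]; rewrite mem_filter => /andP[/eqP qcyc _] ->; apply/cent1vP.
  by rewrite vclsMl vclsMr qcyc eq_sym.
have -> : m = \sum_v vcls v * m * vcls v.
  rewrite -[LHS]mulr1 -sum_vcls mulr_sumr; apply: eq_bigr => v _.
  by rewrite -m_comm -mulrA vcls_idem.
apply: memv_suml => v _; apply: subvP (mem_corner_cls m v v); apply: sub_span.
move=> x /mapP[q]; rewrite mem_filter => /andP[/andP[/eqP q_v /eqP q_v'] Qq] ->.
by apply: map_f; rewrite mem_filter q_v q_v' eqxx Qq.
Qed.

Definition ad_arrows (m : A) : {ffun E -> A} := [ffun a => m * acls a - acls a * m].

Lemma ad_arrows_linear : linear ad_arrows.
Proof.
move=> c x y; apply/ffunP => a; rewrite !ffunE mulrDl mulrDr -scalerAl -scalerAr.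
by rewrite scalerBr opprD addrACA.
Qed.

Definition adL := linfun ad_arrows.

Lemma adLE m : adL m = ad_arrows m.
Proof. by apply: linfun_linearE; apply: ad_arrows_linear. Qed.

Hypothesis pi_surj : forall z : A, exists x, pi x = z.

Lemma cycle_span_ker_ad : (cycle_span :&: lker adL)%VS = 'Z(fullv)%VS.
Proof.
apply/vspaceP => m; rewrite memv_cap memv_ker adLE memv_cap memvf /=.
apply/idP/idP => [/andP[/cycle_spanP m_comm /eqP ad0] | /centvP m_cent].
  have inner0 := diffop_eq0 (diffop_inner m).
  apply/centvP => z _; have [x <-] := pi_surj z.
  apply/eqP; rewrite -subr_eq0 inner0 // => [v | a].
    by apply/eqP; rewrite subr_eq0 m_comm.
  by have := congr1 (fun f : {ffun E -> A} => f a) ad0; rewrite !ffunE.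
have m_comm z : m * z = z * m by apply: m_cent; apply: memvf.
apply/andP; split; first by apply/cycle_spanP.
by apply/eqP/ffunP => a; rewrite !ffunE m_comm subrr.
Qed.

Definition inner_span := (adL @: cycle_span)%VS.

Lemma dim_inner_span : (\dim inner_span + \dim 'Z(fullv : {vspace A}))%N = card_QC Q.
Proof. by rewrite -dim_cycle_span -(limg_ker_dim adL cycle_span) cycle_span_ker_ad addnC. Qed.

Definition fsingle (r : E) (y : A) : {ffun E -> A} := [ffun a => if a == r then y else 0].

Lemma fsingle_linear r : linear (fsingle r).
Proof.
by move=> c x y; apply/ffunP => a; rewrite !ffunE; case: eqP; rewrite ?scaler0 ?addr0.
Qed.

Definition fsingleL r := linfun (fsingle r).

Lemma fsingleLE r y : fsingleL r y = fsingle r y.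
Proof. by apply: linfun_linearE; apply: fsingle_linear. Qed.

Lemma fsingleL_img_eq0 r u a :
  u \in (fsingleL r @: <<corner_cls (t r) (h r)>>)%VS -> a != r -> u a = 0.
Proof. by case/memv_imgP => y _ ->; rewrite fsingleLE ffunE => /negPf ->. Qed.

Definition corner_funs := (\sum_r fsingleL r @: <<corner_cls (t r) (h r)>>)%VS.

Lemma corner_funsP (g : {ffun E -> A}) :
  reflect (forall a, g a \in <<corner_cls (t a) (h a)>>%VS) (g \in corner_funs).
Proof.
apply: (iffP idP) => [/memv_sumP[us us_in ->] a | g_in].
  rewrite sum_ffunE (bigD1 a) //= big1 ?addr0 => [|r ra]; last first.
    by apply: fsingleL_img_eq0 (us_in r isT) _; rewrite eq_sym.
  by have /memv_imgP[y y_in ->] := us_in a isT; rewrite fsingleLE ffunE eqxx.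
have -> : g = \sum_r fsingle r (g r).
  apply/ffunP => a; rewrite sum_ffunE (bigD1 a) //= big1 ?addr0 => [|r ra].
    by rewrite ffunE eqxx.
  by rewrite ffunE eq_sym (negPf ra).
by apply: memv_sumr => r _; rewrite -fsingleLE; apply: memv_img.
Qed.

Lemma dim_corner_funs : \dim corner_funs = card_B2 Q.
Proof.
have /directvP-> : directv corner_funs.
  apply/directv_sum_independent => us us_in sum0 r _; apply/ffunP => a.
  rewrite ffunE; have [->|ar] := eqVneq a r; last first.
    exact: fsingleL_img_eq0 (us_in r isT) ar.
  have := congr1 (fun f : {ffun E -> A} => f r) sum0.
  rewrite sum_ffunE ffunE (bigD1 r) //= big1 ?addr0 // => r' r'r.
  by apply: fsingleL_img_eq0 (us_in r' isT) _; rewrite eq_sym.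
apply: eq_bigr => r _ /=; rewrite limg_dim_eq ?dim_span_filter //.
apply/eqP; rewrite -subv0; apply/subvP => y; rewrite memv_cap memv_ker memv0 fsingleLE.
by case/andP => _ /eqP/ffunP/(_ r); rewrite !ffunE eqxx => ->.
Qed.

Lemma corner_funs_corner g : [ffun a => corner g a] \in corner_funs.
Proof. by apply/corner_funsP => a; rewrite ffunE; apply: mem_corner_cls. Qed.

Lemma corner_funs_fix g : g \in corner_funs -> forall a, corner g a = g a.
Proof. by move/corner_funsP => g_in a; apply: corner_cls_fix. Qed.

Lemma inner_span_sub : (inner_span <= corner_funs)%VS.
Proof.
apply/subvP => _ /memv_imgP[m /cycle_spanP m_comm ->]; rewrite adLE.
apply/corner_funsP => a; rewrite ffunE.
have <- : vcls (t a) * (m * acls a - acls a * m) * vcls (h a) = m * acls a - acls a * m.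
  rewrite mulrBr mulrBl !mulrA -m_comm -(mulrA m) vclsMacls -(mulrA m) aclsMvcls.
  by rewrite -(mulrA (acls a)) m_comm mulrA aclsMvcls.
exact: mem_corner_cls.
Qed.

Definition outer_space := (corner_funs :\: inner_span)%VS.

Definition outer_fun (i : 'I_(\dim outer_space)) := (vbasis outer_space)`_i.

Definition outer_diffop i := arrow_diffop (outer_fun i).

Lemma outer_fun_mem i : outer_fun i \in outer_space.
Proof. by apply: vbasis_mem; apply: mem_nth; rewrite size_tuple. Qed.

Lemma outer_diffop_vpath i v : outer_diffop i (pbasis (vpath t h v)) = 0.
Proof. exact: arrow_diffop_vpath. Qed.

Lemma outer_diffop_apath i a : outer_diffop i (pbasis (apath t h a)) = outer_fun i a.
Proof.
rewrite /outer_diffop arrow_diffop_apath corner_funs_fix //.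
exact: subvP (diffvSl _ _) _ (outer_fun_mem i).
Qed.

Lemma outer_diffopP i : is_diffop pi (outer_diffop i).
Proof. exact: arrow_diffopP. Qed.

Lemma outer_diffop_free c :
  is_inner pi (fun x => \sum_i c i *: outer_diffop i x) -> forall i, c i = 0.
Proof.
case=> m m_inner.
have /cycle_spanP m_cyc : forall v, m * vcls v = vcls v * m.
  move=> v; have := m_inner (pbasis (vpath t h v)).
  rewrite big1 => [inner0|i _]; last by rewrite outer_diffop_vpath scaler0.
  by apply/eqP; rewrite -subr_eq0 -inner0.
have ad_m : adL m = \sum_i c i *: outer_fun i.
  apply/ffunP => a; rewrite adLE ffunE sum_ffunE -m_inner.
  by apply: eq_bigr => i _; rewrite outer_diffop_apath ffunE.
have : \sum_i c i *: outer_fun i \in (outer_space :&: inner_span)%VS.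
  rewrite memv_cap -ad_m memv_img // andbT ad_m.
  by apply: memv_suml => i _; apply/memvZ/outer_fun_mem.
rewrite capv_diff memv0 => /eqP.
by apply/freeP/basis_free/vbasisP.
Qed.

Lemma diffop_vertex0_arrows D : is_diffop pi D ->
  (forall v, D (pbasis (vpath t h v)) = 0) ->
  [ffun a => D (pbasis (apath t h a))] \in corner_funs.
Proof.
case=> _ D_mul Dv; set g := fun a => D (pbasis (apath t h a)).
have -> : [ffun a => g a] = [ffun a => corner g a].
  apply/ffunP => a; rewrite !ffunE /corner /g.
  have := D_mul (pbasis (vpath t h (t a))) (pbasis (apath t h a)).
  rewrite pmul_vpathl eqxx Dv mul0r add0r => <-.
  have := D_mul (pbasis (apath t h a)) (pbasis (vpath t h (h a))).
  by rewrite pmul_vpathr eqxx Dv mulr0 addr0 => {1}->.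
exact: corner_funs_corner.
Qed.

Lemma outer_diffop_span D : is_diffop pi D ->
  exists c, is_inner pi (fun x => D x - \sum_i c i *: outer_diffop i x).
Proof.
move=> D_diff; have [m0 Dv] := diffop_vertex_inner D_diff.
pose D1 x := D x - (m0 * pi x - pi x * m0).
have D1_diff : is_diffop pi D1 := diffopB D_diff (diffop_inner m0).
have D1v v : D1 (pbasis (vpath t h v)) = 0 by rewrite /D1 Dv subrr.
have := diffop_vertex0_arrows D1_diff D1v.
rewrite -(addv_diff_cap corner_funs inner_span) (capv_idPr inner_span_sub).
case/memv_addP => w w_out [_ /memv_imgP[m1 /cycle_spanP m1_cyc ->] D1_arrows].
pose c i := coord (vbasis outer_space) i w.
have w_sum a : \sum_i c i *: outer_diffop i (pbasis (apath t h a)) = w a.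
  rewrite [in RHS](coord_vbasis w_out) sum_ffunE.
  by apply: eq_bigr => i _; rewrite outer_diffop_apath ffunE.
exists c, (m0 + m1) => x; apply/eqP; rewrite -subr_eq0 addrAC.
set D2 := fun x =>
  D x - ((m0 + m1) * pi x - pi x * (m0 + m1)) - \sum_i c i *: outer_diffop i x.
rewrite -/(D2 x) diffop_eq0 //.
- by apply: diffopB (diffopB D_diff (diffop_inner _)) (diffop_lincomb _ outer_diffopP).
- move=> v; rewrite /D2 Dv big1 => [|i _]; last by rewrite outer_diffop_vpath scaler0.
  have m1v : m1 * vcls v - vcls v * m1 = 0 by rewrite m1_cyc subrr.
  by rewrite commr_subD m1v addr0 subrr subr0.
move=> a; rewrite /D2 w_sum commr_subD opprD addrA -/(D1 _).
have := congr1 (fun f : {ffun E -> A} => f a) D1_arrows; rewrite adLE !ffunE => ->.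
by rewrite addrK subrr.
Qed.

Lemma H1_dim_outer : H1_dim pi (\dim outer_space).
Proof.
exists outer_diffop; split; [exact: outer_diffopP | exact: outer_diffop_free | ].
exact: outer_diffop_span.
Qed.

Lemma dim_outer_space :
  (\dim outer_space + card_QC Q = card_B2 Q + \dim 'Z(fullv : {vspace A}))%N.
Proof.
have := dimv_cap_compl corner_funs inner_span.
rewrite (capv_idPr inner_span_sub) dim_corner_funs -/outer_space => <-.
by rewrite -dim_inner_span addnA [(\dim outer_space + _)%N]addnC.
Qed.

End Basis.
End Derivations.
End PathAlgebra.

Theorem proposition3p4 (k : fieldType) (V E : finType) (t h : E -> V)
  (Hconn : connected_quiver t h)
  (I : pathalg t h k -> Prop) (HI : is_ideal I) (HIR2 : forall x, I x -> inR2 x)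
  (A : falgType k) (pi : pathalg t h k -> A) (Hpi : is_quotient_map I pi)
  (Q : seq (qpath t h)) (HQ : path_basis pi Q) :
  exists n : nat, H1_dim pi n /\
    (n + card_QC Q = card_B2 Q + \dim ('Z(fullv : {vspace A}))%VS)%N.
Proof.
case: Hpi => pi_lin pi_mul pi_one pi_surj _; case: HQ => Q_basis _ _.
have {}Q_basis : basis_of fullv [seq pcls pi q | q <- Q].
  by under eq_map do rewrite /pcls pbasisE.
exists (\dim (outer_space pi Q)); split.
  exact: (H1_dim_outer pi_lin pi_mul pi_one Q_basis).
exact: (dim_outer_space pi_lin pi_mul pi_one Q_basis pi_surj).
Qed.
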